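(* Let $\alpha$ be a formula containing no points-to atom with $\mathcal P(\alpha)\subseteq\mathcal P_l$, and let $\alpha'$ be a decoration of $\alpha$. If $(s,h')\models_{\mathrm{dec}(\mathcal R)}\alpha'$ and $(s,h')\rhd_{\mathrm{id}}(s,h)$, then $(s,h)\models_{\mathcal R}\alpha$.
   Context: Separation logic: variables $\mathcal V$, constant $\bot$; formulas from $x\not\approx x'$, $x\approx x'$, $x\mapsto(t_1,\dots,t_k)$, $p(x_1,\dots,x_n)$, $*$, $\vee$, $\exists$. SID: finite set of rules $p(x_1,\dots,x_n)\Leftarrow\pi$ ($\pi$ quantifier-free separating conjunction of atoms), existential variables $\mathrm{fv}(\pi)\setminus\{x_1,\dots,x_n\}$; $\mathcal P(\phi)$: predicates reachable (reflexively) from those of $\phi$ through rule bodies. Locations $\mathcal L$ with $\ell_\bot$; stores $s$ map variables and $\bot$ to $\mathcal L$ with $\bot\in\mathrm{dom}(s)$, $s(x)=\ell_\bot$ iff $x=\bot$; heaps are finite partial maps $\mathcal L\to\mathcal L^k$ with $\ell_\bot\notin$ domain; $\models_{\mathcal R}$ standard SL semantics (predicate atoms via a rule and an extension of the store to its existential variables). Standing assumptions: $\mathcal R$ is an SID of progressing rules $p(x_1,\dots,x_n)\Leftarrow x_1\mapsto(y_1,\dots,y_\kappa)*\rho$ ($\rho$ free of points-to), part of an entailment problem $(\phi,\psi,\mathcal R)$; $\mathcal P_l=\mathcal P(\phi)$; $\vec w=(w_1,\dots,w_\nu)$, $\nu>0$, the free variables of $\phi,\psi$, not occurring in $\mathcal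 R$; stores considered contain $w_1,\dots,w_\nu$ in their domain; every rule of $\mathcal R$ has exactly $\mu$ existential variables. $\vec\bot$ ($\vec\ell_\bot$) is $\kappa+\nu+\mu$ copies of $\bot$ ($\ell_\bot$); $\mathsf{bot}$ is a unary predicate with single rule $\mathsf{bot}(x)\Leftarrow x\mapsto\vec\bot$, included in $\mathrm{dec}(\mathcal R)$. Decorations: for $p\in\mathcal P_l$ of arity $n$ and $X\subseteq\{1,\dots,n\}$, $p_X$ is a fresh predicate of arity $n+\nu$. A decoration of a formula $\alpha$ without points-to atoms with $\mathcal P(\alpha)\subseteq\mathcal P_l$ replaces each atom $q(y_1,\dots,y_m)$ by some $q_X(y_1,\dots,y_m,\vec w)$ with $X\subseteq\{1,\dots,m\}$ chosen per atom. $\mathrm{dec}(\mathcal R)$ is the set of rules $p_X(x_1,\dots,x_n,\vec w)\Leftarrow x_1\mapsto(y_1,\dots,y_\kappa,\vec w,z_1,\dots,z_\mu)\sigma*\rho'*\mathop{*}_{i\in I}\mathsf{bot}(z_i)$ where $p(x_1,\dots,x_n)\Leftarrow x_1\mapsto(y_1,\dots,y_\kappa)*\rho$ is in $\mathcal R$, $X\subseteq\{1,\dots,n\}$, $\{z_1,\dots,z_\mu\}$ is the set of its existential variables, $\sigma$ is a substitution with $\mathrm{dom}(\sigma)\subseteq\{z_1,\dots,z_\mu\}$, $\mathrm{img}(\sigma)\subseteq\{x_1,\dots,x_n,w_1,\dots,w_\nu,z_1,\dots,z_\mu\}$, $\rho'$ is a decoration of $\rho\sigma$, and $I\subseteq\{1,\dots,\mu\}$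 with $z_i\notin\mathrm{dom}(\sigma)$ for $i\in I$. Expansion: for $h:\mathcal L\to\mathcal L^\kappa$ and $h':\mathcal L\to\mathcal L^{\kappa+\nu+\mu}$, $(s,h')\rhd_{\mathrm{id}}(s,h)$ iff $h'=\mathrm{main}(h')\uplus\mathrm{aux}(h')$ with: $\mathrm{dom}(\mathrm{main}(h'))=\mathrm{dom}(h)$; for $\ell\in\mathrm{dom}(\mathrm{main}(h'))$, $h'(\ell)=(h(\ell),s(w_1),\dots,s(w_\nu),b_1,\dots,b_\mu)$ for some $b_i$; for $\ell\in\mathrm{dom}(\mathrm{aux}(h'))$, $h'(\ell)=\vec\ell_\bot$ and $\ell$ is among the last $\mu$ components of $h'(\ell')$ for some $\ell'\in\mathrm{dom}(\mathrm{main}(h'))$. *)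

From Stdlib Require List.
From mathcomp Require Import all_boot.
Set Implicit Arguments. Unset Strict Implicit. Unset Printing Implicit Defensive.

Inductive term (V : Type) := TVar of V | TBot.
Arguments TBot {V}. Arguments TVar {V}.

Inductive formula (V Pr : Type) :=
| FEq  of V & V
| FNeq of V & V
| FPto of V & seq (term V)
| FPred of Pr & seq V
| FSep of formula V Pr & formula V Pr
| FOr  of formula V Pr & formula V Pr
| FEx  of V & formula V Pr.
Arguments FEq {V Pr}. Arguments FNeq {V Pr}. Arguments FPto {V Pr}.
Arguments FPred {V Pr}. Arguments FSep {V Pr}. Arguments FOr {V Pr}.
Arguments FEx {V Pr}.

Section Syntax.
Context {V : eqType} {Pr : Type}.

Definition tfv (t : term V) : seq V := if t is TVar x then [:: x] else [::].

Fixpoint fv (f : formula V Pr) : seq V :=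
  match f with
  | FEq x y | FNeq x y => [:: x; y]
  | FPto x ts => x :: flatten (map tfv ts)
  | FPred _ xs => xs
  | FSep f g | FOr f g => fv f ++ fv g
  | FEx x f => [seq y <- fv f | y != x]
  end.

Fixpoint preds (f : formula V Pr) : seq Pr :=
  match f with
  | FPred p _ => [:: p]
  | FSep f g | FOr f g => preds f ++ preds g
  | FEx _ f => preds f
  | _ => [::]
  end.

Definition sepfold (f0 : formula V Pr) (l : seq (formula V Pr)) : formula V Pr :=
  foldl (fun f a => FSep f a) f0 l.

End Syntax.

Record grule (V Pr : Type) := GRule {
  gr_pred : Pr; gr_params : seq V; gr_body : formula V Pr }.

(* points-to-free atoms (the atoms of rho in a progressing rule) *)
Inductive patom (V P : Type) :=
| AEq of V & V | ANeq of V & V | APred of P & seq V.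
Arguments AEq {V P}. Arguments ANeq {V P}. Arguments APred {V P}.

Definition atomF {V P : Type} (a : patom V P) : formula V P :=
  match a with AEq x y => FEq x y | ANeq x y => FNeq x y | APred p xs => FPred p xs end.

(* progressing rule  p(x1,...,xn) <= x1 |-> (y1,...,y_kappa) * rho  *)
Record prule (V P : Type) := PRule {
  pr_pred : P;
  pr_root : V;
  pr_rest : seq V;
  pr_pto  : seq (term V);
  pr_rho  : seq (patom V P) (* rho, a separating conjunction of atoms without points-to *)
}.

Section Rules.
Context {V : eqType} {P : Type}.

Definition params (r : prule V P) : seq V := pr_root r :: pr_rest r.

Definition body (r : prule V P) : formula V P :=
  sepfold (FPto (pr_root r) (pr_pto r)) (map atomF (pr_rho r)).

Definition to_grule (r : prule V P) : grule V P := GRule (pr_pred r) (params r) (body r).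

Definition ex_vars (r : prule V P) : seq V :=
  undup [seq x <- fv (body r) | x \notin params r].

Definition origR (R : seq (prule V P)) : grule V P -> Prop :=
  fun g => exists2 r, List.In r R & g = to_grule r.

Inductive reach (R : seq (prule V P)) (phi : formula V P) : P -> Prop :=
| reach_base q : List.In q (preds phi) -> reach R phi q
| reach_step q' r q : reach R phi q' -> List.In r R -> pr_pred r = q' ->
                      List.In q (preds (body r)) -> reach R phi q.

End Rules.

Definition heap (L : Type) := L -> option (seq L).

Section Semantics.
Context {V L : eqType} {Pr : Type} (lbot : L).

Definition valid_store (s : V -> L) : Prop := forall x, s x <> lbot.

Definition teval (s : V -> L) (t : term V) : L :=
  if t is TVar x then s x else lbot.

Definition upd (s : V -> L) (x : V) (v : L) : V -> L :=
  fun y => if y == x then v else s y.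

Definition hdisj (h1 h2 : heap L) : Prop := forall l, h1 l = None \/ h2 l = None.
Definition hunion (h1 h2 : heap L) : heap L :=
  fun l => if h1 l is Some v then Some v else h2 l.
Definition hemp (h : heap L) : Prop := forall l, h l = None.

Inductive sat (Rules : grule V Pr -> Prop) : (V -> L) -> heap L -> formula V Pr -> Prop :=
| sat_eq s h x y : s x = s y -> hemp h -> sat Rules s h (FEq x y)
| sat_neq s h x y : s x <> s y -> hemp h -> sat Rules s h (FNeq x y)
| sat_pto s h x ts : h (s x) = Some (map (teval s) ts) ->
    (forall l, l != s x -> h l = None) -> sat Rules s h (FPto x ts)
| sat_pred s h p xs r s' : Rules r -> gr_pred r = p ->
    size (gr_params r) = size xs -> valid_store s' ->
    (forall i x0, i < size xs -> s' (nth x0 (gr_params r) i) = s (nth x0 xs i)) ->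
    sat Rules s' h (gr_body r) -> sat Rules s h (FPred p xs)
| sat_sep s h f g h1 h2 : hdisj h1 h2 -> (forall l, h l = hunion h1 h2 l) ->
    sat Rules s h1 f -> sat Rules s h2 g -> sat Rules s h (FSep f g)
| sat_orl s h f g : sat Rules s h f -> sat Rules s h (FOr f g)
| sat_orr s h f g : sat Rules s h g -> sat Rules s h (FOr f g)
| sat_ex s h x f v : v <> lbot -> sat Rules (upd s x v) h f -> sat Rules s h (FEx x f).

End Semantics.

(* decorated predicate symbols: bot, and p_X for p a predicate and X a subset
   of {1,...,n} (represented by a strictly increasing list) *)
Inductive dpred (P : Type) := DBot | DDec of P & seq nat.
Arguments DBot {P}.

Definition subidx (n : nat) (X : seq nat) : Prop :=
  sorted ltn X /\ all (fun i => 0 < i <= n) X.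

Section Decoration.
Context {V : eqType} {P : Type} (w : seq V).

(* There is no
   case for points-to atoms (decorations are only defined for formulas
   without points-to atoms). *)
Fixpoint decor (a : formula V P) (b : formula V (dpred P)) {struct a} : Prop :=
  match a, b with
  | FEq x y, FEq x' y' => x = x' /\ y = y'
  | FNeq x y, FNeq x' y' => x = x' /\ y = y'
  | FPred q ys, FPred (DDec q' X) ys' => q = q' /\ subidx (size ys) X /\ ys' = ys ++ w
  | FSep a1 a2, FSep b1 b2 => decor a1 b1 /\ decor a2 b2
  | FOr a1 a2, FOr b1 b2 => decor a1 b1 /\ decor a2 b2
  | FEx x a1, FEx x' b1 => x = x' /\ decor a1 b1
  | _, _ => False
  end.

Fixpoint decor_list (l : seq (formula V P)) (l' : seq (formula V (dpred P))) : Prop :=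
  match l, l' with
  | [::], [::] => True
  | a :: l, b :: l' => decor a b /\ decor_list l l'
  | _, _ => False
  end.

Definition tsubst (sigma : V -> V) (t : term V) : term V :=
  if t is TVar x then TVar (sigma x) else TBot.

Definition asubst (sigma : V -> V) (a : patom V P) : patom V P :=
  match a with
  | AEq x y => AEq (sigma x) (sigma y)
  | ANeq x y => ANeq (sigma x) (sigma y)
  | APred p xs => APred p (map sigma xs)
  end.

Definition bot_rule (kappa mu : nat) (x : V) : grule V (dpred P) :=
  GRule DBot [:: x] (FPto x (nseq (kappa + size w + mu) TBot)).

Definition decR (kappa mu : nat) (R : seq (prule V P)) (Pl : P -> Prop) :
    grule V (dpred P) -> Prop :=
  fun g =>
    (exists x, g = bot_rule kappa mu x) \/
    exists r X zs (sigma : V -> V) (rho' : seq (formula V (dpred P))) Is,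
      List.In r R /\ Pl (pr_pred r) /\ subidx (size (params r)) X /\
          (uniq zs /\ zs =i ex_vars r) /\
          ((forall x, x \notin zs -> sigma x = x) /\
          (forall z, z \in zs -> sigma z \in params r ++ w ++ zs)) /\
          decor_list [seq atomF (asubst sigma a) | a <- pr_rho r] rho' /\
          (subseq Is zs /\ (forall z, z \in Is -> sigma z = z)) /\
          g = GRule (DDec (pr_pred r) X) (params r ++ w)
                (sepfold
                   (FPto (pr_root r)
                      (map (tsubst sigma) (pr_pto r ++ map TVar w ++ map TVar zs)))
                   (rho' ++ [seq FPred DBot [:: z] | z <- Is])).

End Decoration.

Section Expansion.
Context {V L : eqType} (lbot : L) (kappa mu : nat) (w : seq V).

Definition expands (s : V -> L) (h' h : heap L) : Prop :=
  exists main aux : heap L,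
    [/\ hdisj main aux, (forall l, h' l = hunion main aux l),
        (forall l, main l = None <-> h l = None),
        (forall l v, h l = Some v ->
           exists bs, size bs = mu /\ main l = Some (v ++ map s w ++ bs)) &
        (forall l u, aux l = Some u ->
           u = nseq (kappa + size w + mu) lbot /\
           exists l' u', main l' = Some u' /\ l \in drop (size u' - mu) u')].

Definition finite_heap (h : heap L) : Prop :=
  exists dl : seq L, forall l, h l <> None -> l \in dl.

Definition wf_heap (k : nat) (h : heap L) : Prop :=
  [/\ finite_heap h, h lbot = None & forall l v, h l = Some v -> size v = k].

End Expansion.

Definition standing {V : eqType} {P : Type} (kappa mu : nat)
    (R : seq (prule V P)) (phi psi : formula V P) (w : seq V) : Prop :=
  [/\
      (forall r, List.In r R -> size (pr_pto r) = kappa /\ uniq (params r)),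
      (forall r, List.In r R -> size (ex_vars r) = mu),
      uniq w /\ 0 < size w,
      (forall r x, List.In r R -> x \in w -> x \notin params r /\ x \notin fv (body r)) &
      fv phi ++ fv psi =i w].

From Stdlib Require List.
From mathcomp Require Import all_boot.
Set Implicit Arguments. Unset Strict Implicit. Unset Printing Implicit Defensive.

(* The proof is a simulation argument by induction on the derivation of
   (t,g) |= f' in dec(R), where g is any subheap of h' and f' is related to an
   undecorated formula f by the relation [undec]: f' arises from f by decorating
   predicate atoms, extending points-to tuples by w and extra terms, and
   conjoining bot atoms.  Decorations are in [undec], and so is every rule body
   of dec(R) with respect to a substitution instance of an original rule body.
   The conclusion is (t, h|dom g) |= f in R: points-to cells of h' are main
   cells whose first kappa components are the cells of h (the w-component,
   which is never bot, tells them apart from auxiliary cells), bot atoms only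
   cover auxiliary cells, which lie outside dom h, and a decorated predicate
   atom unfolds to the original rule through the substitution lemma.
   Instantiating g := h' gives the theorem, since h|dom h' = h. *)

Section SatFacts.
Context {V L : eqType} {Pr : Type} (lbot : L) (Rules : grule V Pr -> Prop).

Lemma sat_ext t g f :
  sat lbot Rules t g f -> forall g2, (forall l, g l = g2 l) -> sat lbot Rules t g2 f.
Proof.
elim=> {t g f}
 [t g x y Hxy Hemp | t g x y Hxy Hemp | t g x ts Hx Hoth | t g p xs r t1 Hr Hp Hsz Hv Hnth _ IH
 | t g f1 f2 g1 g2 Hd Hu _ IH1 _ IH2 | t g f1 f2 _ IH | t g f1 f2 _ IH | t g x f1 v Hv _ IH] g3 E.
- by apply: sat_eq => // l; rewrite -E.
- by apply: sat_neq => // l; rewrite -E.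
- by apply: sat_pto => [|l Hl]; rewrite -E //; apply: Hoth.
- exact: (sat_pred Hr Hp Hsz Hv Hnth (IH _ E)).
- by apply: (sat_sep Hd _ (IH1 _ (fun l => erefl)) (IH2 _ (fun l => erefl))) => l; rewrite -E.
- exact: sat_orl (IH _ E).
- exact: sat_orr (IH _ E).
- exact: sat_ex Hv (IH _ E).
Qed.

End SatFacts.

Section Substitution.
Context {V : eqType} {Pr : Type}.

(* Variable renaming of a quantifier-free formula (binders are left untouched;
   the operation is only used on quantifier-free formulas). *)
Fixpoint fsubst (sigma : V -> V) (f : formula V Pr) : formula V Pr :=
  match f with
  | FEq x y => FEq (sigma x) (sigma y)
  | FNeq x y => FNeq (sigma x) (sigma y)
  | FPto x ts => FPto (sigma x) (map (tsubst sigma) ts)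
  | FPred p xs => FPred p (map sigma xs)
  | FSep a b => FSep (fsubst sigma a) (fsubst sigma b)
  | FOr a b => FOr (fsubst sigma a) (fsubst sigma b)
  | FEx x a => FEx x a
  end.

Fixpoint qfree (f : formula V Pr) : bool :=
  match f with
  | FSep a b | FOr a b => qfree a && qfree b
  | FEx _ _ => false
  | _ => true
  end.

Lemma sepfold_cat (f0 : formula V Pr) l1 l2 :
  sepfold f0 (l1 ++ l2) = sepfold (sepfold f0 l1) l2.
Proof. exact: foldl_cat. Qed.

Lemma fsubst_sepfold sigma (f0 : formula V Pr) l :
  fsubst sigma (sepfold f0 l) = sepfold (fsubst sigma f0) (map (fsubst sigma) l).
Proof. by elim: l f0 => //= a l IH f0; rewrite /sepfold /= -!/(sepfold _ _) IH. Qed.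

Lemma qfree_sepfold (f0 : formula V Pr) l :
  qfree (sepfold f0 l) = qfree f0 && all qfree l.
Proof.
elim: l f0 => /= [|a l IH] f0; first by rewrite andbT.
by rewrite /sepfold /= -!/(sepfold _ _) IH /= andbA.
Qed.

Lemma sat_fsubst (L : eqType) (lbot : L) (Rules : grule V Pr -> Prop) sigma f :
  qfree f -> forall t g, sat lbot Rules t g (fsubst sigma f) ->
  sat lbot Rules (fun y => t (sigma y)) g f.
Proof.
have teval_subst t u : teval lbot t (tsubst sigma u) = teval lbot (fun y => t (sigma y)) u.
  by case: u.
elim: f => [x y|x y|x ts|p xs|a IHa b IHb|a IHa b IHb|//] /= Hq t g H.
- by inversion H; subst; apply: sat_eq.
- by inversion H; subst; apply: sat_neq.
- inversion H as [| |t0 g0 x0 ts0 Hc Ho| | | | |]; subst; apply: sat_pto => //.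
  by rewrite Hc -map_comp; congr Some; apply: eq_map => u /=; rewrite teval_subst.
- inversion H as [| | |t0 g0 p0 xs0 r t1 Hr Hp Hsz Hv Hnth Hb| | | |]; subst.
  apply: (sat_pred Hr erefl _ Hv _ Hb); first by rewrite Hsz size_map.
  by move=> i x0 Hi; rewrite Hnth ?size_map // (nth_map x0).
- move/andP: Hq => [Ha Hb]; inversion H as [| | | |t0 g0 f0 f1 g1 g2 Hd Hu H1 H2| | |]; subst.
  exact: (sat_sep Hd Hu (IHa Ha _ _ H1) (IHb Hb _ _ H2)).
- move/andP: Hq => [Ha Hb]; inversion H as [| | | | |t0 g0 f0 f1 H1|t0 g0 f0 f1 H1|]; subst.
  + exact: sat_orl (IHa Ha _ _ H1).
  + exact: sat_orr (IHb Hb _ _ H1).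
Qed.

End Substitution.

Section RuleBodies.
Context {V : eqType} {P : Type}.

Lemma body_fsubst sigma (r : prule V P) :
  fsubst sigma (body r) =
  sepfold (FPto (sigma (pr_root r)) (map (tsubst sigma) (pr_pto r)))
          [seq atomF (asubst sigma a) | a <- pr_rho r].
Proof.
rewrite /body fsubst_sepfold /= -map_comp; congr sepfold.
by apply: eq_map => -[].
Qed.

Lemma qfree_body (r : prule V P) : qfree (body r).
Proof. by rewrite /body qfree_sepfold /= all_map; elim: (pr_rho r) => //= -[]. Qed.

End RuleBodies.

Section Undecoration.
Context {V : eqType} {P : Type} (w : seq V) (kappa : nat).

Inductive undec : formula V P -> formula V (dpred P) -> Prop :=
| U_eq x y : undec (FEq x y) (FEq x y)
| U_neq x y : undec (FNeq x y) (FNeq x y)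
| U_pred q X ys : undec (FPred q ys) (FPred (DDec q X) (ys ++ w))
| U_pto x ts bs : size ts = kappa -> undec (FPto x ts) (FPto x (ts ++ map TVar w ++ bs))
| U_sep a1 a2 b1 b2 : undec a1 b1 -> undec a2 b2 -> undec (FSep a1 a2) (FSep b1 b2)
| U_or a1 a2 b1 b2 : undec a1 b1 -> undec a2 b2 -> undec (FOr a1 a2) (FOr b1 b2)
| U_ex x a b : undec a b -> undec (FEx x a) (FEx x b)
| U_bot a b z : undec a b -> undec a (FSep b (FPred DBot [:: z])).

Lemma undec_ptoE f x us :
  undec f (FPto x us) ->
  exists2 ts, size ts = kappa & exists bs, f = FPto x ts /\ us = ts ++ map TVar w ++ bs.
Proof. by move=> H; inversion H; subst; exists ts => //; exists bs. Qed.

Lemma undec_predE f p xs :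
  undec f (FPred p xs) ->
  exists q X ys, [/\ p = DDec q X, f = FPred q ys & xs = ys ++ w].
Proof. by move=> H; inversion H; exists q, X, ys. Qed.

Lemma decor_undec a b : decor w a b -> undec a b.
Proof.
elim: a b => [x y|x y|x ts|q ys|a1 IH1 a2 IH2|a1 IH1 a2 IH2|x a IH]
  [x' y'|x' y'|x' ts'|[|q' X] ys'|b1 b2|b1 b2|x' b] //=.
- by move=> [-> ->]; apply: U_eq.
- by move=> [-> ->]; apply: U_neq.
- by move=> [-> [_ ->]]; apply: U_pred.
- by move=> [/IH1 H1 /IH2 H2]; apply: U_sep.
- by move=> [/IH1 H1 /IH2 H2]; apply: U_or.
- by move=> [-> /IH H]; apply: U_ex.
Qed.

Lemma undec_sepfold l l' :
  decor_list w l l' -> forall f0 f0', undec f0 f0' -> undec (sepfold f0 l) (sepfold f0' l').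
Proof.
elim: l l' => [|a l IH] [|b l'] //= [Hab Hl] f0 f0' H0.
rewrite /sepfold /= -!/(sepfold _ _); apply: IH => //.
by apply: U_sep => //; apply: decor_undec.
Qed.

Lemma undec_bots (zs : seq V) f g :
  undec f g -> undec f (sepfold g [seq FPred DBot [:: z] | z <- zs]).
Proof.
elim: zs g => //= z zs IH g H.
by rewrite /sepfold /= -!/(sepfold _ _); apply: IH; apply: U_bot.
Qed.

End Undecoration.

Section Heaps.
Context {L : eqType}.

Definition restrict (h g : heap L) : heap L :=
  fun l => if g l is Some _ then h l else None.

Definition hsub (g h' : heap L) : Prop := forall l u, g l = Some u -> h' l = Some u.

Lemma hsub_union (g g1 g2 h' : heap L) :
  hdisj g1 g2 -> (forall l, g l = hunion g1 g2 l) -> hsub g h' -> hsub g1 h' /\ hsub g2 h'.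
Proof.
move=> Hd Hu Hs; split=> l u E; apply: Hs; rewrite Hu /hunion ?E //.
by case: (Hd l) => E1; [rewrite E1 | congruence].
Qed.

Lemma restrict_disj (h g1 g2 : heap L) : hdisj g1 g2 -> hdisj (restrict h g1) (restrict h g2).
Proof. by move=> Hd l; rewrite /restrict; case: (Hd l) => ->; auto. Qed.

Lemma restrict_union (h g g1 g2 : heap L) :
  hdisj g1 g2 -> (forall l, g l = hunion g1 g2 l) ->
  forall l, restrict h g l = hunion (restrict h g1) (restrict h g2) l.
Proof.
move=> Hd Hu l; rewrite /restrict Hu /hunion.
case E1: (g1 l) => [u|]; case E2: (g2 l) => [u'|] //=; last by case: (h l).
by case: (Hd l); congruence.
Qed.

Lemma restrict_outside (h g g1 g2 : heap L) :
  (forall l, g l = hunion g1 g2 l) -> (forall l u, g2 l = Some u -> h l = None) ->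
  forall l, restrict h g1 l = restrict h g l.
Proof.
move=> Hu Hout l; rewrite /restrict Hu /hunion; case: (g1 l) => //.
by case E2: (g2 l) => [u|] //; rewrite (Hout _ _ E2).
Qed.

End Heaps.

Definition cell_layout {V L : eqType} (lbot : L) (kappa mu : nat) (w : seq V)
    (s0 : V -> L) (h' h : heap L) : Prop :=
  forall l u, h' l = Some u ->
  match h l with
  | None => u = nseq (kappa + size w + mu) lbot
  | Some v => size v = kappa /\ exists rest, u = v ++ map s0 w ++ rest
  end.

Section Simulation.
Context {V L : eqType} {P : Type} (lbot : L) (kappa mu : nat).
Context (R : seq (prule V P)) (Pl : P -> Prop) (w : seq V) (s0 : V -> L) (h h' : heap L).

Hypothesis w_nonempty : 0 < size w.
Hypothesis s0_valid : valid_store lbot s0.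
Hypothesis R_kappa : forall r, List.In r R -> size (pr_pto r) = kappa.
Hypothesis R_w_fresh : forall r x, List.In r R -> x \in w -> x \notin fv (body r).

Hypothesis h'_layout : cell_layout lbot kappa mu w s0 h' h.

Lemma w_not_bot t : valid_store lbot t ->
  forall a c n, a ++ map t w ++ c <> nseq n lbot.
Proof.
move: w_nonempty; case: w => [//|x w'] _ Ht a c n E.
have : t x \in nseq n lbot by rewrite -E mem_cat /= in_cons eqxx orbT.
by move/nseqP => [Hx _]; apply: (Ht x).
Qed.

Lemma pto_cell t l (ts : seq (term V)) bs :
  valid_store lbot t -> size ts = kappa ->
  h' l = Some (map (teval lbot t) (ts ++ map TVar w ++ bs)) ->
  h l = Some (map (teval lbot t) ts).
Proof.
move=> Ht Hsz; rewrite !map_cat -[map _ (map TVar w)]map_comp => /h'_layout.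
case: (h l) => [v [Hv [rest Ev]] | Ev]; last by case: (w_not_bot Ht Ev).
move/eqP: Ev; rewrite eqseq_cat; last by rewrite size_map Hsz Hv.
by case/andP => /eqP <-.
Qed.

Lemma bot_cells_outside t g z :
  sat lbot (decR w kappa mu R Pl) t g (FPred DBot [:: z]) -> hsub g h' ->
  forall l u, g l = Some u -> h l = None.
Proof.
move=> H Hsub l u E.
inversion H as [| | |t0 g0 p0 xs0 r t1 Hr Hp Hsz Hv Hnth Hb| | | |]; subst.
case: Hr => [[x0 Er]|[r' [X [zs [sigma [rho' [Is [_ [_ [_ [_ [_ [_ [_ Er]]]]]]]]]]]]]];
  subst r; last by [].
inversion Hb as [| |t2 g2 x2 ts2 Hc Ho| | | | |]; subst.
have := h'_layout (Hsub _ _ E); case: (h l) => // v [_ [rest Eu]].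
case: (eqVneq l (t1 x0)) => [El|Nl]; last by rewrite Ho in E.
subst l; rewrite Hc map_nseq in E; case: E => E.
by exfalso; apply: (w_not_bot s0_valid (a:=v) (c:=rest)); rewrite -Eu -E.
Qed.

Lemma decR_pred_rule g q X :
  decR w kappa mu R Pl g -> gr_pred g = DDec q X ->
  exists r (sigma : V -> V),
    [/\ List.In r R, pr_pred r = q, gr_params g = params r ++ w,
        {in params r, forall x, sigma x = x} &
        undec w kappa (fsubst sigma (body r)) (gr_body g)].
Proof.
case=> [[x ->] //|[r [X' [zs [sigma [rho' [Is [Hin [_ [_ [[_ Hzs]
  [[Hsid _] [Hdl [_ ->]]]]]]]]]]]]]] [<- _].
have zs_ex x : x \in zs -> x \notin params r /\ x \notin w.
  rewrite Hzs /ex_vars mem_undup mem_filter => /andP [Hp Hf]; split => //.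
  by apply/negP => Hw; move: (R_w_fresh Hin Hw); rewrite Hf.
have Hsp : {in params r, forall x, sigma x = x}.
  by move=> x Hx; apply: Hsid; apply/negP => /zs_ex []; rewrite Hx.
exists r, sigma; split => //.
rewrite body_fsubst sepfold_cat; apply: undec_bots; apply: (undec_sepfold Hdl).
rewrite Hsp ?mem_head // !map_cat.
have -> : map (tsubst sigma) (map TVar w) = map TVar w.
  rewrite -map_comp; apply/eq_in_map => x Hx /=.
  by rewrite Hsid //; apply/negP => /zs_ex [_]; rewrite Hx.
by apply: U_pto; rewrite size_map R_kappa.
Qed.

Lemma sat_undec t g f' :
  sat lbot (decR w kappa mu R Pl) t g f' -> valid_store lbot t -> hsub g h' ->
  forall f, undec w kappa f f' -> sat lbot (origR R) t (restrict h g) f.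
Proof.
elim=> {t g f'}
 [t g x y Hxy Hemp | t g x y Hxy Hemp | t g x ts Hx Hoth | t g p xs r0 t1 Hr0 Hp Hsz Hv1 Hnth _ IH
 | t g f1 f2 g1 g2 Hd Hu _ IH1 H2 IH2 | t g f1 f2 _ IH | t g f1 f2 _ IH | t g x f1 v Hv _ IH]
 Ht Hsub f HR.
- by inversion HR; subst; apply: sat_eq => // l; rewrite /restrict Hemp.
- by inversion HR; subst; apply: sat_neq => // l; rewrite /restrict Hemp.
- have [ts' Hsz [bs [-> Ets]]] := undec_ptoE HR; rewrite Ets in Hx.
  apply: sat_pto => [|l Hl]; last by rewrite /restrict Hoth.
  by rewrite /restrict Hx; apply: (pto_cell Ht Hsz (Hsub _ _ Hx)).
- have [q [X [ys [Ep -> Exs]]]] := undec_predE HR.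
  rewrite {}Ep in Hp; subst xs.
  have [r [sigma [Hin Hq Hpar Hsp Hrel]]] := decR_pred_rule Hr0 Hp.
  have Hbody := sat_fsubst (qfree_body r) (IH Hv1 Hsub _ Hrel).
  have Hps : size (params r) = size ys.
    by apply/eqP; rewrite -(eqn_add2r (size w)) -!size_cat -Hpar Hsz.
  apply: (sat_pred (r := to_grule r) _ Hq Hps _ _ Hbody) => //; first by exists r.
  move=> i x0 Hi /=; rewrite Hsp; last by apply: mem_nth; rewrite Hps.
  have := Hnth i x0; rewrite Hpar !nth_cat Hps Hi; apply.
  by rewrite size_cat (leq_trans Hi) // leq_addr.
- have [Hsub1 Hsub2] := hsub_union Hd Hu Hsub.
  inversion HR as [| | | |a1 a2 b1 b2 H1r H2r| | |a b z Hr]; subst.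
  + apply: (sat_sep (restrict_disj h Hd) (restrict_union h Hd Hu)).
    * exact: IH1.
    * exact: IH2.
  + apply: (sat_ext (IH1 Ht Hsub1 _ Hr)).
    exact: restrict_outside Hu (bot_cells_outside H2 Hsub2).
- by inversion HR; subst; apply: sat_orl; apply: IH.
- by inversion HR; subst; apply: sat_orr; apply: IH.
- inversion HR as [| | | | | |x0 a b Hr|]; subst.
  apply: (sat_ex Hv); apply: IH => // y; rewrite /upd.
  by case: (y == x) => //; apply: Ht.
Qed.

End Simulation.

Section Expansion.
Context {V L : eqType} (lbot : L) (kappa mu : nat) (w : seq V) (s : V -> L) (h h' : heap L).

Hypothesis h_kappa : forall l v, h l = Some v -> size v = kappa.
Hypothesis h'_expands : expands lbot kappa mu w s h' h.

Lemma expands_layout : cell_layout lbot kappa mu w s h' h.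
Proof.
move=> l u.
have [main [aux [_ Hu Hmn Hmv Haux]]] := h'_expands.
rewrite Hu /hunion; case E: (h l) => [v|].
- have [bs [_ ->]] := Hmv l v E; case=> <-.
  by split; [exact: h_kappa E | exists bs].
- have -> : main l = None by apply/Hmn.
  by move/Haux => [-> _].
Qed.

(* dom h is contained in dom h', hence h|dom h' = h. *)
Lemma restrict_expansion l : restrict h h' l = h l.
Proof.
have [main [aux [_ Hu _ Hmv _]]] := h'_expands.
rewrite /restrict; case E: (h l) => [v|]; last by case: (h' l).
by have [bs [_ Em]] := Hmv l v E; rewrite Hu /hunion Em.
Qed.

End Expansion.

Theorem mainTheorem18 (V L : eqType) (P : Type) (lbot : L) (kappa mu : nat)
    (R : seq (prule V P)) (phi psi : formula V P) (w : seq V)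
    (alpha : formula V P) (alpha' : formula V (dpred P))
    (s : V -> L) (h h' : heap L) :
  standing kappa mu R phi psi w ->
  (forall q, List.In q (preds alpha) -> reach R phi q) ->
  decor w alpha alpha' ->
  valid_store lbot s ->
  wf_heap lbot kappa h ->
  wf_heap lbot (kappa + size w + mu) h' ->
  sat lbot (decR w kappa mu R (reach R phi)) s h' alpha' ->
  expands lbot kappa mu w s h' h ->
  sat lbot (origR R) s h alpha.
Proof.
move=> [R_rules _ [_ w_nonempty] R_w_fresh _] _ Hdec Hs [_ _ h_kappa] _ Hsat Hexp.
have R_kappa r : List.In r R -> size (pr_pto r) = kappa by case/R_rules.
have R_fresh r x : List.In r R -> x \in w -> x \notin fv (body r).
  by move=> Hin Hx; case: (R_w_fresh r x Hin Hx).
have Hsim := sat_undec w_nonempty Hs R_kappa R_fresh (expands_layout h_kappa Hexp)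
  Hsat Hs (fun l u E => E) (decor_undec kappa Hdec).
apply: (sat_ext Hsim) => l.
exact: (restrict_expansion Hexp l).
Qed.
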